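(* Let $m\ge3$, $C$ a set of $m$ candidates, $T$ the set of all $m!$ strict rankings of $C$, and $w=(w_1,\dots,w_m)$ with $1=w_1\ge\cdots\ge w_m=0$; for $t\in T$, $\alpha\in C$ let $\sigma_t(\alpha)=w_i$ where $i$ is the position of $\alpha$ in $t$. Suppose $n$ voters each independently choose a ranking uniformly from $T$, let $N_t$ be the number choosing $t$, and $|\alpha|=\sum_t N_t\sigma_t(\alpha)$. Let $$K=\begin{cases}2\,m!\,(1-w_{m-1})^{-1}, & w_{m-1}<1,\\ 0, & w_{m-1}=1.\end{cases}$$ Then with probability 1 the following holds: if some candidate $a$ satisfies $|a|>|\alpha|$ for all $\alpha\ne a$, then for every $\beta\neq a$, $$Q_1(\beta)\le Q_2(\beta)+K,$$ where $Q_1(\beta)$ and $Q_2(\beta)$ are defined as follows. Let $\bar T_{\beta a}$ be the set of types ranking $\beta$ above $a$, and $T_\beta$ the set of types ranking $\beta$ first. $Q_1(\beta)$ is the optimal value (or $+\infty$ if infeasible) of the integer linear program: minimize $\sum_{t\in\bar T_{\beta a}}x_t$ subject to $$\sum_{t\in T_\beta}y_t(1-\sigma_t(\alpha))-\sum_{t\in\bar T_{\beta a}}x_t(\sigma_t(\beta)-\sigma_t(\alpha))\ge |\alpha|-|\beta|\quad\forall\alpha\ne\beta,$$ $\sum_{t\in T_\beta}y_t=\sum_{t\in\bar T_{\beta a}}x_t$, $0\le x_t\le N_t$ for $t\in\bar T_{\beta a}$, $y_t\ge0$ for $t\in T_\beta$, and all $x_t,y_t$ integers. $Q_2(\beta)$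 is the optimal value (or $+\infty$ if infeasible) of the same program with the integrality constraints removed and the constraint $0\le x_t\le N_t$ replaced by $0\le x_t\le N_t-K$.
   Context: Voters' rankings (''types'') are drawn under the Impartial Culture model: each of the $n$ voters independently picks one of the $m!$ rankings with equal probability. *)

From HB Require Import structures.
From mathcomp Require Import all_boot all_order all_algebra all_fingroup.
From mathcomp Require Import boolp classical_sets reals constructive_ereal ereal.
Set Implicit Arguments. Unset Strict Implicit. Unset Printing Implicit Defensive.
Import Order.TTheory GRing.Theory Num.Theory.
Local Open Scope ring_scope.

(* Types (strict rankings): t : {perm 'I_m}, read as
   "t i is the candidate at position i" (position 0 = top).
   So the (0-based) position of candidate c in t is (t^-1 c).
   Weights: w : nat -> R, w i is the weight of (0-based) position i,
   i.e. the paper's w_{i+1}. *)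

Section Voting.
Variables (R : realType) (m : nat) (w : nat -> R) (n : nat).
Implicit Types (t : {perm 'I_m}) (c : 'I_m).

Definition sigma t c : R := w (val ((t^-1)%g c)).

Variable p : {ffun 'I_n -> {perm 'I_m}}.

Definition Ncount t : nat := #|[set i | p i == t]|.

Definition score c : R := \sum_t (Ncount t)%:R * sigma t c.

Definition above t b c : bool := (val ((t^-1)%g b) < val ((t^-1)%g c))%N.
Definition first t b : bool := val ((t^-1)%g b) == 0%N.

(* K = 2 m! / (1 - w_{m-1}) if w_{m-1} < 1, else 0; w_{m-1} is w (m-2) here *)
Definition Kconst : R :=
  if w (m - 2)%N < 1 then 2 * (m`!)%:R / (1 - w (m - 2)%N) else 0.

Definition feasible (a b : 'I_m) (ub : {perm 'I_m} -> R) (integral : bool)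
    (x y : {perm 'I_m} -> R) : Prop :=
  [/\ (forall c, c != b ->
         \sum_(t | first t b) y t * (1 - sigma t c)
         - \sum_(t | above t b a) x t * (sigma t b - sigma t c)
         >= score c - score b),
      \sum_(t | first t b) y t = \sum_(t | above t b a) x t,
      (forall t, above t b a -> 0 <= x t <= ub t),
      (forall t, first t b -> 0 <= y t) &
      (integral -> (forall t, above t b a -> x t \is a Num.int) /\
                   (forall t, first t b -> y t \is a Num.int))].

(* Optimal value (infimum of objective over feasible points; +oo if infeasible) *)
Definition progval (a b : 'I_m) (ub : {perm 'I_m} -> R) (integral : bool)
    : \bar R :=
  ereal_inf [set ((\sum_(t | above t b a) x t)%:E) | x in
               [set x | exists y, feasible a b ub integral x y]].

Definition Q1 (a b : 'I_m) : \bar R :=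
  progval a b (fun t => (Ncount t)%:R) true.

Definition Q2 (a b : 'I_m) : \bar R :=
  progval a b (fun t => (Ncount t)%:R - Kconst) false.

Definition prop5_event : Prop :=
  forall a : 'I_m, (forall c, c != a -> score c < score a) ->
  forall b : 'I_m, b != a -> (Q1 a b <= Q2 a b + Kconst%:E)%E.

End Voting.

(* Probability of an event under Impartial Culture: each profile
   p : 'I_n -> {perm 'I_m} has probability (1/m!)^n. *)
Definition IC_prob (R : realType) (m n : nat)
    (E : {ffun 'I_n -> {perm 'I_m}} -> Prop) : R :=
  \sum_(p : {ffun 'I_n -> {perm 'I_m}} | `[< E p >]) ((m`!)%:R^-1) ^+ n.

From HB Require Import structures.
From mathcomp Require Import all_boot all_order all_algebra all_fingroup.
From mathcomp Require Import boolp classical_sets reals constructive_ereal ereal.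
From mathcomp Require Import zify ring lra.
Set Implicit Arguments. Unset Strict Implicit. Unset Printing Implicit Defensive.
Import Order.TTheory GRing.Theory Num.Theory.
Local Open Scope ring_scope.

(* The inequality holds for every profile and every candidate a, so its probability is 1.  It suffices to turn
   every feasible point (x, y) of the relaxed program into an integral feasible
   point whose objective exceeds that of x by at most K.

   If w_{m-1} < 1, round every x_t and y_t down, add floor K voters to x at a type
   t0 ranking b and a in the last two places, and let the type t1 obtained from t0
   by moving b to the top absorb in y the difference of the two totals.  Measured
   relative to t1, rounding costs at most 1 per y-type and 2 per x-type in each
   constraint, less than 3 m!/2 in all, while the floor K voters at t0 gain at
   least (1 - w_{m-1}) floor K > 2 m! - 1.

   If w_{m-1} = 1, a voter gives a point to every candidate but his last one, so
   the constraint for c only involves the totals X_c, Y_c of x and y over the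
   types ranking c last: Y_c - X_c >= |c| - |b|.  Summing over c shows that
   D = sum_c (|c| - |b|)^+ is at most sum_c min(X_c, (|b| - |c|)^+), hence at most
   the objective, and an integral point of objective D puts (|c| - |b|)^+ voters
   on one type ranking b first and c last and takes z_c <= (|b| - |c|)^+ of the
   available voters ranking b above a and c last, with sum_c z_c = D. *)

Lemma split_leq_sum (I : finType) (P : pred I) (V : I -> nat) (D : nat) :
  (D <= \sum_(i | P i) V i)%N ->
  {z : I -> nat | forall i, (z i <= V i)%N & \sum_(i | P i) z i = D}.
Proof.
elim: D => [|D IH] leDV; first by exists (fun=> 0%N); rewrite ?big1.
have [z lezV sumz] := IH (ltnW leDV).
case: (pickP (fun i => P i && (z i < V i)%N)) => [j /andP [Pj ltzVj] | full].
  exists (fun i => z i + (i == j))%N.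
    by move=> i; case: eqP => [->|_]; rewrite ?addn1 ?addn0.
  rewrite big_split /= sumz (bigD1 j) //= eqxx big1 => [|i /andP [_ /negbTE ->] //].
  by lia.
exfalso; suff : (\sum_(i | P i) V i <= \sum_(i | P i) z i)%N by rewrite sumz; lia.
by apply: leq_sum => i Pi; have /negbT := full i; rewrite Pi -leqNgt.
Qed.

Definition perm2 (T : finType) (x1 x2 y1 y2 : T) : {perm T} :=
  (tperm x1 y1 * tperm (tperm x1 y1 x2) y2)%g.

Lemma perm2L (T : finType) (x1 x2 y1 y2 : T) :
  x1 != x2 -> y1 != y2 -> perm2 x1 x2 y1 y2 x1 = y1.
Proof.
move=> neqx neqy; rewrite permM tpermL tpermD 1?eq_sym //.
by rewrite -{1}(tpermL x1 y1) (inj_eq perm_inj).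
Qed.

Lemma perm2R (T : finType) (x1 x2 y1 y2 : T) : perm2 x1 x2 y1 y2 x2 = y2.
Proof. by rewrite permM tpermL. Qed.

Section Rankings.
Variable m : nat.
Implicit Types (t : {perm 'I_m}) (a b : 'I_m).

Lemma first_above t a b : b != a -> first t b -> above t b a.
Proof.
move=> neqba /eqP posb0; rewrite /above posb0 lt0n; apply: contra neqba => /eqP posa0.
by apply/eqP/(perm_inj (s := (t^-1)%g))/val_inj; rewrite /= posa0.
Qed.

Lemma card_above a b : b != a -> (2 * #|[pred t | above t b a]| <= m`!)%N.
Proof.
move=> neqba; set A := [pred t | above t b a].
have swap_above : [set (t * tperm a b)%g | t in A] \subset ~: [set t in A].
  apply/fintype.subsetP => _ /imsetP [t At ->].
  rewrite !inE /above !invgM tpermV !permM tpermR tpermL -leqNgt.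
  exact: ltnW.
have := subset_leq_card swap_above; rewrite card_imset; last exact: mulIg.
have := cardsC [set t in A]; rewrite cardsE card_Sn => <-.
by rewrite mul2n -addnn leq_add2l.
Qed.

End Rankings.

Lemma floor_loss_mul (R : archiRealDomainType) (r v u : R) :
  v <= u -> 0 <= u -> - u <= ((Num.floor r)%:~R - r) * v.
Proof. by have := floor_le r; have := floorD1_gt r; rewrite intrD; nra. Qed.

Lemma sum_indicator (R : pzSemiRingType) (I : finType) (P : pred I) (i0 : I)
    (F : I -> R) :
  P i0 -> \sum_(i | P i) (i == i0)%:R * F i = F i0.
Proof.
move=> P_i0; rewrite (bigD1 i0) //= eqxx mul1r big1 ?addr0 // => i /andP [_].
by move/negbTE ->; rewrite mul0r.
Qed.

Lemma le_sub_min_subn (R : realDomainType) (X Y : R) (u v : nat) :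
  0 <= X -> 0 <= Y -> u%:R - v%:R <= Y - X ->
  X - Num.min X (v - u)%N%:R + (u - v)%N%:R <= Y.
Proof.
move=> X_ge0 Y_ge0 diff; case: (leqP v u) => [le_vu | /ltnW le_uv].
  have -> : (v - u)%N = 0%N by apply/eqP; rewrite subn_eq0.
  by rewrite natrB // min_r // mulr0n; lra.
have -> : (u - v)%N = 0%N by apply/eqP; rewrite subn_eq0.
rewrite natrB // mulr0n addr0.
by case: (lerP X (v%:R - u%:R)); lra.
Qed.

Section Margin.
Variables (R : realType) (m : nat) (w : nat -> R) (a b : 'I_m).
Implicit Types (x y : {perm 'I_m} -> R) (c : 'I_m).

Definition margin c x y : R :=
  \sum_(t | first t b) y t * (1 - sigma w t c)
  - \sum_(t | above t b a) x t * (sigma w t b - sigma w t c).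

Lemma marginB c x1 y1 x2 y2 :
  margin c x1 y1 - margin c x2 y2
  = margin c (fun t => x1 t - x2 t) (fun t => y1 t - y2 t).
Proof.
rewrite /margin; under [in RHS]eq_bigr do rewrite mulrBl.
under [X in _ = _ - X]eq_bigr do rewrite mulrBl.
by rewrite !sumrB; ring.
Qed.

Lemma margin_shift c x y (r : R) :
  \sum_(t | first t b) y t = \sum_(t | above t b a) x t ->
  margin c x y = \sum_(t | first t b) y t * (1 - sigma w t c - r)
                 + \sum_(t | above t b a) x t * (r - (sigma w t b - sigma w t c)).
Proof.
move=> balanced; rewrite /margin.
under [X in _ = X + _]eq_bigr do rewrite mulrBr.
under [X in _ = _ + X]eq_bigr do rewrite mulrBr.
by rewrite !sumrB -!mulr_suml balanced; ring.
Qed.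

End Margin.

Lemma progval_le_addr (R : realType) (m : nat) (w : nat -> R) (n : nat)
    (p : {ffun 'I_n -> {perm 'I_m}}) (a b : 'I_m) (ub1 ub2 : {perm 'I_m} -> R)
    (int1 int2 : bool) (K : R) :
  (forall x y, feasible w p a b ub2 int2 x y ->
     exists x' y', feasible w p a b ub1 int1 x' y' /\
       \sum_(t | above t b a) x' t <= \sum_(t | above t b a) x t + K) ->
  (progval w p a b ub1 int1 <= progval w p a b ub2 int2 + K%:E)%E.
Proof.
move=> improve; rewrite /progval -leeBlDr //.
apply/ereal_infP => _ [x [y feas] <-]; rewrite leeBlDr // -EFinD.
have [x' [y' [feas' le_obj]]] := improve x y feas.
apply: le_trans (ereal_inf_lbound _) _; first by exists x' => //; exists y'.
by rewrite lee_fin.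
Qed.

Section Weights.
Variables (R : realType) (k : nat) (w : nat -> R).
Local Notation m := k.+3.
(* so that w k.+1 and w k.+2 are the paper's w_{m-1} and w_m *)
Hypothesis w_first : w 0%N = 1.
Hypothesis w_last : w k.+2 = 0.
Hypothesis w_nonincr : forall i j : nat, (i <= j)%N -> (j < m)%N -> w j <= w i.
Implicit Types (t : {perm 'I_m}) (c : 'I_m).

Lemma sigma_ge0 t c : 0 <= sigma w t c.
Proof. by rewrite /sigma -w_last; apply: w_nonincr; rewrite // -ltnS ltn_ord. Qed.

Lemma sigma_le1 t c : sigma w t c <= 1.
Proof. by rewrite /sigma -w_first; apply: w_nonincr; rewrite ?ltn_ord. Qed.

Lemma above_last t a b : above t b a -> t ord_max != b.
Proof.
apply: contraTneq => <-; rewrite /above permK -leqNgt -ltnS; exact: ltn_ord.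
Qed.

Lemma first_last t b : first t b -> t ord_max != b.
Proof. by apply: contraTneq => <-; rewrite /first permK. Qed.

Lemma sum_by_last (M : nmodType) (P : pred {perm 'I_m}) b (F : {perm 'I_m} -> M) :
  (forall t, P t -> t ord_max != b) ->
  \sum_(t | P t) F t = \sum_(c | c != b) \sum_(t | P t && (t ord_max == c)) F t.
Proof. exact: (partition_big (fun t => t ord_max) (fun c => c != b)). Qed.

Lemma sigma_le t t' c c' :
  (val ((t^-1)%g c) <= val ((t'^-1)%g c'))%N -> sigma w t' c' <= sigma w t c.
Proof. by move=> le_pos; apply: w_nonincr; rewrite ?ltn_ord. Qed.

Variables (n : nat) (p : {ffun 'I_n -> {perm 'I_m}}).
Local Notation K := (Kconst m w).
Local Notation floorR r := ((Num.floor r)%:~R : R).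

Section Rounding.
Hypothesis w_penult_lt1 : w k.+1 < 1.
Variables (a b : 'I_m) (x y : {perm 'I_m} -> R).
Hypothesis neq_ba : b != a.
Hypothesis feas : feasible w p a b (fun t => (Ncount p t)%:R - K) false x y.

Let gap := 1 - w k.+1.

Let gap_gt0 : 0 < gap. Proof. by rewrite /gap subr_gt0. Qed.

Let gap_le1 : gap <= 1.
Proof.
by have := @w_nonincr k.+1 k.+2 (leqnSn _) (ltnSn _); rewrite w_last /gap; lra.
Qed.

Let fact_ge2 : 2 <= (m`!)%:R :> R.
Proof. by rewrite (ler_nat R 2) !factS; have := fact_gt0 k; nia. Qed.

Let K_mul_gap : K * gap = 2 * (m`!)%:R.
Proof.
by rewrite /Kconst (_ : (m - 2)%N = k.+1) // w_penult_lt1 mulfVK ?gt_eqF.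
Qed.

Let K_ge : 2 * (m`!)%:R <= K.
Proof.
have K_gt0 : 0 < K.
  by rewrite -(pmulr_lgt0 _ gap_gt0) K_mul_gap mulr_gt0 // ltr0n fact_gt0.
by rewrite -K_mul_gap -[X in _ <= X]mulr1 ler_wpM2l // ltW.
Qed.

(* t0 has b and a in positions m-2 and m-1 (from 0); t1 is t0 with positions m-2 and 0
   swapped, so that b comes first and nobody else moves up *)
Let penult : 'I_m := Ordinal (leqnSn k.+2).
Let s0 := perm2 b a penult ord_max.
Let t0 := (s0^-1)%g.
Let t1 := ((s0 * tperm penult ord0)^-1)%g.

Let t0_above : above t0 b a.
Proof.
rewrite /above invgK perm2R perm2L //.
by rewrite -val_eqE /= ltn_eqF.
Qed.

Let sigma_t0_b : sigma w t0 b = w k.+1.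
Proof. by rewrite /sigma invgK perm2L // -val_eqE /= ltn_eqF. Qed.

Let first_t1 : first t1 b.
Proof. by rewrite /first invgK permM perm2L ?tpermL // -val_eqE /= ltn_eqF. Qed.

Let sigma_t1_le_t0 c : c != b -> sigma w t1 c <= sigma w t0 c.
Proof.
move=> neq_cb; apply: sigma_le; rewrite !invgK (permM s0).
have : s0 c != penult.
  by rewrite -(@perm2L _ b a penult ord_max) ?(inj_eq perm_inj) // -val_eqE /= ltn_eqF.
by case: tpermP => [-> /eqP //| -> _ |].
Qed.

Let kK := floorR K.
Let xr t := floorR (x t) + (t == t0)%:R * kK.
Let yr t := if t == t1 then \sum_(s | above s b a) xr s
                            - \sum_(s | first s b && (s != t1)) floorR (y s)
            else floorR (y t).
Let nA := #|[pred t : {perm 'I_m} | above t b a]|.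
Let nB := #|[pred t : {perm 'I_m} | first t b]|.

Let nB_le_nA : nB%:R <= nA%:R :> R.
Proof.
rewrite ler_nat; apply: subset_leq_card; apply/fintype.subsetP => t.
by rewrite !inE; apply: first_above.
Qed.

Let nA_le : 2 * nA%:R <= (m`!)%:R :> R.
Proof. by rewrite -natrM ler_nat; apply: card_above. Qed.

Let kK_gt : K - 1 < kK.
Proof. by have := floorD1_gt K; rewrite intrD; lra. Qed.

Let kK_ge0 : 0 <= kK.
Proof. by rewrite ler0z floor_ge0; have := K_ge; have := fact_ge2; lra. Qed.

Let sum_xr : \sum_(t | above t b a) xr t = \sum_(t | above t b a) floorR (x t) + kK.
Proof. by rewrite big_split /= sum_indicator. Qed.

Let sum_yr : \sum_(t | first t b) yr t = \sum_(t | above t b a) xr t.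
Proof.
rewrite (bigD1 t1) //= {1}/yr eqxx.
rewrite [X in _ + X](eq_bigr (fun s => floorR (y s))) ?subrK // => t /andP [_ /negbTE].
by rewrite /yr => ->.
Qed.

Let sum_xr_le : \sum_(t | above t b a) xr t <= \sum_(t | above t b a) x t + K.
Proof. by rewrite sum_xr lerD ?floor_le //; apply: ler_sum => t _; apply: floor_le. Qed.

Let xr_bounds t : above t b a -> 0 <= xr t <= (Ncount p t)%:R.
Proof.
have [_ _ x_bounds _ _] := feas; move=> /x_bounds /andP [x_ge0 x_le].
have floor_ge0 : 0 <= floorR (x t) by rewrite ler0z floor_ge0.
have floor_le_x := floor_le (x t); have := floor_le K; have := kK_ge0.
by rewrite /xr; case: (t == t0) => /= *; apply/andP; split; lra.
Qed.

Let yr_ge0 t : first t b -> 0 <= yr t.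
Proof.
have [_ balanced x_bounds y_ge0 _] := feas.
move=> first_tb; rewrite /yr; case: eqP => _; last by rewrite ler0z floor_ge0 y_ge0.
have floor_x : \sum_(s | above s b a) x s - nA%:R <= \sum_(s | above s b a) floorR (x s).
  rewrite -sumr_const -sumrB; apply: ler_sum => s _.
  by have := floorD1_gt (x s); rewrite intrD; lra.
have floor_y :
    \sum_(s | first s b && (s != t1)) floorR (y s) <= \sum_(s | above s b a) x s.
  rewrite -balanced [X in _ <= X](bigD1 t1) //=; apply: ler_wpDl; first exact: y_ge0.
  by apply: ler_sum => s _; apply: floor_le.
by rewrite sum_xr; have := kK_gt; have := K_ge; have := nA_le; have := fact_ge2; lra.
Qed.

Let loss_first c :
  - nB%:R <= \sum_(t | first t b) (yr t - y t) * (1 - sigma w t c - (1 - sigma w t1 c)).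
Proof.
rewrite -mulNrn -sumr_const; apply: ler_sum => t _.
rewrite /yr; case: eqP => [->|_]; first by rewrite subrr mulr0 lerN10.
by apply: floor_loss_mul; have := sigma_ge0 t c; have := sigma_le1 t1 c; lra.
Qed.

Let gain_above c : c != b ->
  - (2 * nA%:R) + kK * gap <= \sum_(t | above t b a)
    (xr t - x t) * (1 - sigma w t1 c - (sigma w t b - sigma w t c)).
Proof.
move=> neq_cb; under eq_bigr do rewrite /xr addrAC mulrDl -mulrA.
rewrite big_split /= sum_indicator // lerD //.
  rewrite mulr_natr -mulNrn -sumr_const.
  apply: ler_sum => t _; apply: floor_loss_mul => //.
  by have := sigma_ge0 t1 c; have := sigma_ge0 t b; have := sigma_le1 t c; lra.
apply: ler_wpM2l; first exact: kK_ge0.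
by have := sigma_t1_le_t0 neq_cb; rewrite sigma_t0_b /gap; lra.
Qed.

Let margin_xr_yr c : c != b -> score w p c - score w p b <= margin w a b c xr yr.
Proof.
have [margin_ge balanced _ _ _] := feas; move=> neq_cb.
have old : score w p c - score w p b <= margin w a b c x y := margin_ge c neq_cb.
suff : 0 <= margin w a b c xr yr - margin w a b c x y by lra.
(* with reference value 1 - sigma_t1(c) the coefficient of the correction at t1
   vanishes *)
rewrite marginB (margin_shift w c (1 - sigma w t1 c)); last first.
  by rewrite !sumrB sum_yr balanced.
have : (K - 1) * gap <= kK * gap by apply: ler_wpM2r; [exact: ltW | exact: ltW].
rewrite mulrBl mul1r K_mul_gap; have := loss_first c; have := gain_above neq_cb.
by have := nB_le_nA; have := nA_le; have := fact_ge2; have := gap_le1; lra.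
Qed.

Lemma relaxed_to_integral_rounding :
  exists x' y', feasible w p a b (fun t => (Ncount p t)%:R) true x' y' /\
    \sum_(t | above t b a) x' t <= \sum_(t | above t b a) x t + K.
Proof.
exists xr, yr; split; last exact: sum_xr_le.
split.
- exact: margin_xr_yr.
- exact: sum_yr.
- exact: xr_bounds.
- exact: yr_ge0.
- move=> _; split=> t _; rewrite ?/yr.
    by rewrite rpredD ?rpredM ?intr_int ?natr_int.
  case: ifP => _; last exact: intr_int.
  by rewrite rpredB ?rpred_sum // => s _; rewrite ?rpredD ?rpredM ?intr_int ?natr_int.
Qed.

End Rounding.

Section Saturated.
Hypothesis w_penult_eq1 : w k.+1 = 1.

Let K_eq0 : K = 0.
Proof. by rewrite /Kconst (_ : (m - 2)%N = k.+1) // w_penult_eq1 ltxx. Qed.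

Lemma sigma_saturated t c : sigma w t c = (t ord_max != c)%:R.
Proof.
rewrite /sigma; have [<-|neq_c] := eqVneq (t ord_max) c; first by rewrite permK.
have le_pos : (val ((t^-1)%g c) <= k.+1)%N.
  rewrite -ltnS ltn_neqAle -ltnS ltn_ord andbT; apply: contra neq_c => /eqP pos_c.
  by apply/eqP; rewrite -[c](permKV t); congr (t _); apply: val_inj.
apply/eqP; rewrite eq_le -{1}w_first -w_penult_eq1 !w_nonincr //.
exact: leq_ltn_trans le_pos _.
Qed.

Definition not_last_votes c : nat :=
  \sum_(t : {perm 'I_m} | t ord_max != c) Ncount p t.

Lemma score_saturated c : score w p c = (not_last_votes c)%:R.
Proof.
rewrite /score /not_last_votes natr_sum [RHS]big_mkcond /=; apply: eq_bigr => t _.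
by rewrite sigma_saturated; case: eqP; rewrite ?mulr0 ?mulr1.
Qed.

Lemma margin_saturated a b c x y :
  margin w a b c x y = \sum_(t | first t b && (t ord_max == c)) y t
                       - \sum_(t | above t b a && (t ord_max == c)) x t.
Proof.
rewrite /margin !big_mkcondr /=; congr (_ - _); apply: eq_bigr => t.
  by rewrite sigma_saturated; case: eqP; rewrite ?subr0 ?subrr ?mulr1 ?mulr0.
move=> /above_last/negbTE; rewrite !sigma_saturated => ->.
by case: eqP; rewrite ?subr0 ?subrr ?mulr1 ?mulr0.
Qed.

Variables (a b : 'I_m) (x y : {perm 'I_m} -> R).
Hypothesis feas : feasible w p a b (fun t => (Ncount p t)%:R - K) false x y.

(* positive and negative parts of |c| - |b|, by truncated subtraction *)
Let gain c := (not_last_votes c - not_last_votes b)%N.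
Let room c := (not_last_votes b - not_last_votes c)%N.
Let D := \sum_(c | c != b) gain c.
Let X c := \sum_(t | above t b a && (t ord_max == c)) x t.
Let U c := \sum_(t | above t b a && (t ord_max == c)) Ncount p t.

Let sum_X : \sum_(c | c != b) X c = \sum_(t | above t b a) x t.
Proof. by rewrite (sum_by_last (b := b)) // => t; apply: above_last. Qed.

Let D_le_transfers : D%:R <= \sum_(c | c != b) Num.min (X c) (room c)%:R.
Proof.
have [margin_ge balanced x_bounds y_ge0 _] := feas.
pose Y c := \sum_(t | first t b && (t ord_max == c)) y t.
have X_ge0 c : 0 <= X c.
  by apply: sumr_ge0 => t /andP [/x_bounds /andP []].
have Y_ge0 c : 0 <= Y c by apply: sumr_ge0 => t /andP [/y_ge0].
have sum_Y : \sum_(c | c != b) Y c = \sum_(t | first t b) y t.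
  by rewrite (sum_by_last (b := b)) // => t; apply: first_last.
have : \sum_(c | c != b) (X c - Num.min (X c) (room c)%:R + (gain c)%:R)
       <= \sum_(c | c != b) Y c.
  apply: ler_sum => c neq_cb; apply: le_sub_min_subn => //.
  have : score w p c - score w p b <= margin w a b c x y := margin_ge c neq_cb.
  by rewrite margin_saturated // !score_saturated.
by rewrite big_split sumrB /= sum_X sum_Y -balanced /D natr_sum; lra.
Qed.

Let D_le_obj : D%:R <= \sum_(t | above t b a) x t.
Proof.
rewrite -sum_X; apply: le_trans D_le_transfers _.
by apply: ler_sum => c _; rewrite ge_min lexx.
Qed.

Let D_le_caps : (D <= \sum_(c | c != b) minn (U c) (room c))%N.
Proof.
have [_ _ x_bounds _ _] := feas.
rewrite -(ler_nat R) natr_sum; apply: le_trans D_le_transfers _.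
apply: ler_sum => c _; case: (leqP (U c) (room c)) => _.
  rewrite ge_min /U natr_sum ler_sum // => t /andP [/x_bounds /andP [_]].
  by rewrite K_eq0 subr0.
by rewrite ge_min lexx orbT.
Qed.

Let z := s2val (split_leq_sum D_le_caps).
Let z_le c : (z c <= minn (U c) (room c))%N := s2valP (split_leq_sum D_le_caps) c.
Let sum_z : \sum_(c | c != b) z c = D := s2valP' (split_leq_sum D_le_caps).
Let split_z c := split_leq_sum (leq_trans (z_le c) (geq_minl _ _)).
Let xi t : R := (s2val (split_z (t ord_max)) t)%:R.

(* tau c ranks b first and c last *)
Let tau c := ((perm2 b c ord0 ord_max)^-1)%g.
Let yi t : R := if t == tau (t ord_max) then (gain (t ord_max))%:R else 0.

Let sum_xi_last c : \sum_(t | above t b a && (t ord_max == c)) xi t = (z c)%:R.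
Proof.
rewrite -(s2valP' (split_z c)) natr_sum.
by apply: eq_bigr => t /andP [_ /eqP <-].
Qed.

Let sum_yi_last c : c != b ->
  \sum_(t | first t b && (t ord_max == c)) yi t = (gain c)%:R.
Proof.
move=> neq_cb; have tau_last : tau c ord_max = c.
  by apply: (canLR (permK _)); rewrite perm2R.
rewrite (eq_bigr (fun t => (t == tau c)%:R * (gain c)%:R)).
  by rewrite sum_indicator // tau_last eqxx andbT /first invgK perm2L // eq_sym.
move=> t /andP [_ /eqP last_t]; rewrite /yi last_t.
by case: eqP; rewrite ?mul1r ?mul0r.
Qed.

Let sum_xi : \sum_(t | above t b a) xi t = D%:R.
Proof.
rewrite (sum_by_last (b := b)) => [|t]; last exact: above_last.
by rewrite (eq_bigr _ (fun c _ => sum_xi_last c)) -natr_sum sum_z.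
Qed.

Let sum_yi : \sum_(t | first t b) yi t = D%:R.
Proof.
rewrite (sum_by_last (b := b)) => [|t]; last exact: first_last.
by rewrite (eq_bigr _ sum_yi_last) -natr_sum.
Qed.

Let margin_xi_yi c : c != b -> score w p c - score w p b <= margin w a b c xi yi.
Proof.
move=> neq_cb; rewrite margin_saturated // sum_xi_last sum_yi_last // !score_saturated.
have := z_le c; rewrite leq_min /room /gain => /andP [_].
set vb := not_last_votes b; set vc := not_last_votes c.
case: (leqP vb vc) => [le_bc | /ltnW le_cb].
  have /eqP -> : (vb - vc == 0)%N by rewrite subn_eq0.
  by rewrite leqn0 => /eqP ->; rewrite natrB // mulr0n subr0.
have /eqP -> : (vc - vb == 0)%N by rewrite subn_eq0.
by move=> le_z; rewrite mulr0n sub0r lerNr opprB -natrB // ler_nat.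
Qed.

Lemma relaxed_to_integral_saturated :
  exists x' y', feasible w p a b (fun t => (Ncount p t)%:R) true x' y' /\
    \sum_(t | above t b a) x' t <= \sum_(t | above t b a) x t + K.
Proof.
exists xi, yi; split; last by rewrite sum_xi K_eq0 addr0 D_le_obj.
split.
- exact: margin_xi_yi.
- by rewrite sum_xi sum_yi.
- by move=> t _; rewrite ler0n ler_nat (s2valP (split_z _)).
- by move=> t _; rewrite /yi; case: ifP.
- by move=> _; split=> t _; rewrite /xi /yi ?natr_int //; case: ifP; rewrite ?natr_int.
Qed.

End Saturated.

Lemma Q1_le_Q2_addK a b : b != a -> (Q1 w p a b <= Q2 w p a b + K%:E)%E.
Proof.
move=> neq_ba; apply: progval_le_addr => x y feas.
have [w_lt1 | w_ge1] := ltP (w k.+1) 1.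
  exact: (relaxed_to_integral_rounding w_lt1 neq_ba feas).
have w_eq1 : w k.+1 = 1 by apply/eqP; rewrite eq_le w_ge1 -{1}w_first w_nonincr.
exact: (relaxed_to_integral_saturated w_eq1 feas).
Qed.

End Weights.

Lemma IC_prob_sure (R : realType) (m n : nat) (E : {ffun 'I_n -> {perm 'I_m}} -> Prop) :
  (forall p, E p) -> IC_prob R E = 1.
Proof.
move=> sure; rewrite /IC_prob (eq_bigl xpredT) => [|p]; last exact: asboolT.
rewrite sumr_const card_ffun card_Sn card_ord -[LHS]mulr_natr natrX -exprMn.
by rewrite mulVf ?expr1n // pnatr_eq0 -lt0n fact_gt0.
Qed.

Theorem proposition5 (R : realType) (m : nat) (w : nat -> R) (n : nat) :
  (3 <= m)%N ->
  w 0%N = 1 -> w (m - 1)%N = 0 ->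
  (forall i j : nat, (i <= j)%N -> (j < m)%N -> w j <= w i) ->
  @IC_prob R m n (fun p => prop5_event w p) = 1.
Proof.
case: m => [|[|[|k]]] // _ w_first w_last w_nonincr.
apply: IC_prob_sure => p a _ b neq_ba.
exact: (Q1_le_Q2_addK w_first w_last w_nonincr).
Qed.
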